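(* Let $\mathfrak{m}_1,\dots,\mathfrak{m}_n$ be maximal ideals of $R$ and $M=R/\mathfrak{m}_1\oplus\cdots\oplus R/\mathfrak{m}_n$. Then $M$ satisfies the dual of proper strong Property $\mathcal{A}$ if and only if either $\mathrm{Max}(R)=\{\mathfrak{m}_1,\dots,\mathfrak{m}_n\}$ or $\mathfrak{m}_1=\mathfrak{m}_2=\cdots=\mathfrak{m}_n$.
   Context: All rings are commutative with identity; $\mathrm{Max}(R)$ is the set of maximal ideals of $R$. For an $R$-module $M$, $W_R(M)=\{r\in R : rM\neq M\}$. $M$ satisfies the dual of proper strong Property $\mathcal{A}$ if for every proper finitely generated ideal $I=\langle a_1,\dots,a_n\rangle$ of $R$ with $a_i\in W_R(M)$ for all $i$, we have $IM\neq M$. *)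

From HB Require Import structures.
From mathcomp Require Import all_boot all_order all_algebra.
Set Implicit Arguments. Unset Strict Implicit. Unset Printing Implicit Defensive.
Import GRing.Theory.
Local Open Scope ring_scope.

Section Defs.
Variable R : comNzRingType.

Definition is_ideal (I : R -> Prop) : Prop :=
  I 0 /\ (forall x y, I x -> I y -> I (x - y)) /\ (forall r x, I x -> I (r * x)).

Definition proper_ideal (I : R -> Prop) : Prop := is_ideal I /\ ~ I 1.

Definition maximal_ideal (I : R -> Prop) : Prop :=
  proper_ideal I /\
  forall J : R -> Prop, proper_ideal J -> (forall x, I x -> J x) ->
    forall x, J x -> I x.

Definition gen_ideal (s : seq R) (x : R) : Prop :=
  exists c : 'I_(size s) -> R, x = \sum_(i < size s) c i * s`_i.

(* The module M = R/m_1 (+) ... (+) R/m_n, realised as R^n / (m_1 x ... x m_n):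
   elements are represented by x : 'I_n -> R, and two representatives are equal
   in M iff they agree componentwise modulo m_i. *)
Variable n : nat.
Variable m : 'I_n -> R -> Prop.

Definition eqM (x y : 'I_n -> R) : Prop := forall i, m i (x i - y i).

Definition rM_eq_M (r : R) : Prop :=
  forall y : 'I_n -> R, exists x : 'I_n -> R, eqM y (fun i => r * x i).

Definition W_M (r : R) : Prop := ~ rM_eq_M r.

Definition IM_eq_M (I : R -> Prop) : Prop :=
  forall y : 'I_n -> R, exists (k : nat) (a : 'I_k -> R) (x : 'I_k -> 'I_n -> R),
    (forall j, I (a j)) /\ eqM y (fun i => \sum_(j < k) a j * x j i).

Definition dual_proper_strong_A : Prop :=
  forall s : seq R, ~ gen_ideal s 1 -> (forall a, a \in s -> W_M a) ->
    ~ IM_eq_M (gen_ideal s).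

End Defs.

(* [W_R(M)] is the union of the [m i], and [IM = M] exactly when the ideal [I]
   lies in none of the [m i]; so the property says that a proper finitely
   generated ideal contained in the union of the [m i] lies in one of them.
   This holds when every maximal ideal is some [m i] (a proper ideal lies in a
   maximal one) and trivially when all [m i] coincide.  Conversely, given a
   maximal ideal [J] that is no [m k] and two distinct [m i0], [m j0], products
   of elements separating maximal ideals give, for each [k], an element of [J]
   in [m i0] or [m j0] but not in [m k]; these elements generate a
   counterexample. *)

From Pilot Require Import Defs.
From HB Require Import structures.
From mathcomp Require Import all_boot all_order all_algebra.
From mathcomp Require Import boolp classical_sets.
Import GRing.Theory.
Local Open Scope classical_set_scope.
Local Open Scope ring_scope.
Set Implicit Arguments. Unset Strict Implicit.

Section Ideals.
Variable R : comNzRingType.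
Implicit Types (I J K L M : set R) (s : seq R).

Lemma idealD I x y : is_ideal I -> I x -> I y -> I (x + y).
Proof.
move=> [I0 [IB _]] Ix Iy.
by have := IB x (0 - y) Ix (IB 0 y I0 Iy); rewrite sub0r opprK.
Qed.

Lemma idealMl I r x : is_ideal I -> I x -> I (r * x).
Proof. by move=> [_ [_ IM]]; apply: IM. Qed.

Lemma idealMr I x r : is_ideal I -> I x -> I (x * r).
Proof. by rewrite mulrC; apply: idealMl. Qed.

Lemma ideal_sum I k (F : 'I_k -> R) :
  is_ideal I -> (forall t, I (F t)) -> I (\sum_(t < k) F t).
Proof.
move=> hI hF; apply: (big_ind I) => //; first by case: hI.
by move=> x y; apply: idealD.
Qed.

Lemma maximal_ideal_is_ideal M : maximal_ideal M -> is_ideal M.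
Proof. by case=> [[]]. Qed.

Lemma maximal_ideal_neq1 M : maximal_ideal M -> ~ M 1.
Proof. by case=> [[]]. Qed.

Lemma maximal_ideal_not_1B M v : maximal_ideal M -> M v -> ~ M (1 - v).
Proof.
move=> hM Mv M1v; apply: (maximal_ideal_neq1 hM).
by rewrite -(subrK v 1); apply: idealD => //; apply: maximal_ideal_is_ideal.
Qed.

(* [M + Rx] is an ideal strictly containing [M], hence contains [1]. *)
Lemma maximal_ideal_invmod M x : maximal_ideal M -> ~ M x ->
  exists b, M (1 - b * x).
Proof.
move=> [[[M0 [MB MM]] _] Mmax] nMx.
pose J z := exists b r, M r /\ z = r + b * x.
have J_ideal : is_ideal J.
  split; first by exists 0, 0; rewrite mul0r addr0.
  split=> [_ _ [b1 [r1 [Mr1 ->]]] [b2 [r2 [Mr2 ->]]]|r _ [b [r1 [Mr1 ->]]]].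
    exists (b1 - b2), (r1 - r2); split; first exact: MB.
    by rewrite mulrBl opprD addrACA.
  by exists (r * b), (r * r1); split; [exact: MM | rewrite mulrDr mulrA].
have [[b [r [Mr e]]]|nJ1] := EM (J 1).
  by exists b; rewrite e addrK.
exfalso; apply: nMx; apply: (Mmax J) => [//|y My|]; first by exists 0, y; rewrite mul0r addr0.
by exists 1, 0; rewrite mul1r add0r.
Qed.

Lemma maximal_ideal_prime M x y : maximal_ideal M -> M (x * y) -> ~ M x -> M y.
Proof.
move=> hM Mxy /(maximal_ideal_invmod hM) [b Mb].
have hI := maximal_ideal_is_ideal hM.
have -> : y = (1 - b * x) * y + b * (x * y) by rewrite mulrBl mul1r mulrA subrK.
by apply: idealD => //; [apply: idealMr | apply: idealMl].
Qed.

Lemma maximal_ideal_eq M M' : maximal_ideal M -> maximal_ideal M' ->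
  M `<=` M' -> M = M'.
Proof.
move=> [_ Mmax] [M'pr _] MM'; apply/seteqP; split=> // x; exact: Mmax.
Qed.

Lemma maximal_ideal_neq M M' : maximal_ideal M -> maximal_ideal M' -> M <> M' ->
  exists x, M x /\ ~ M' x.
Proof.
move=> hM hM' MM'; apply: contrapT => nx; apply/MM'/maximal_ideal_eq => // x Mx.
by apply: contrapT => nM'x; apply: nx; exists x.
Qed.

Lemma maximal_ideal_avoid J L K :
    maximal_ideal J -> maximal_ideal L -> maximal_ideal K -> J <> K -> L <> K ->
  exists g, J g /\ L g /\ ~ K g.
Proof.
move=> hJ hL hK JK LK.
have [c [Jc nKc]] := maximal_ideal_neq hJ hK JK.
have [d [Ld nKd]] := maximal_ideal_neq hL hK LK.
exists (c * d); split; first by apply: idealMr => //; apply: maximal_ideal_is_ideal.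
split; first by apply: idealMl => //; apply: maximal_ideal_is_ideal.
by move/(maximal_ideal_prime hK)/(_ nKc).
Qed.

(* Zorn's lemma is applied to proper ideals containing [I], together with the
   empty set, which is the union of the empty chain. *)
Lemma exists_maximal_ideal I : Defs.proper_ideal I ->
  exists J, maximal_ideal J /\ I `<=` J.
Proof.
move=> Ipr; have [[I0 _] _] := Ipr.
pose P A := A = set0 \/ (Defs.proper_ideal A /\ I `<=` A).
have [A [PA Amax]] : exists A, P A /\ forall B, A `<` B -> ~ P B.
  apply: Zorn_bigcup => F FP Ftot.
  have [[B FB [b Bb]]|nF] := EM (exists2 B, F B & B !=set0); last first.
    by left; apply/seteqP; split=> // x [X FX Xx]; apply: nF; exists X => //; exists x.
  have inhabited X x : F X -> X x -> Defs.proper_ideal X /\ I `<=` X.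
    by move=> FX Xx; case: (FP X FX) => // X0; move: Xx; rewrite X0.
  have [[[B0 _] _] IB] := inhabited B b FB Bb.
  right; split; [split; [split; [by exists B|split]|] | by move=> x /IB; exists B].
  - move=> x y [X FX Xx] [Y FY Yy].
    have [XY|YX] := Ftot X Y FX FY.
      exists Y => //; have [[[_ [YB _]] _] _] := inhabited Y y FY Yy.
      exact: YB (XY x Xx) Yy.
    exists X => //; have [[[_ [XB _]] _] _] := inhabited X x FX Xx.
    exact: XB Xx (YX y Yy).
  - move=> r x [X FX Xx]; exists X => //.
    by have [[? _] _] := inhabited X x FX Xx; apply: idealMl.
  - by move=> [X FX X1]; have [[_ ?] _] := inhabited X 1 FX X1.
case: PA => [A0|[Apr IA]].
  exfalso; apply: (Amax I); last by rewrite /P; right; split.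
  by rewrite A0; split=> // /(_ 0 I0).
exists A; split => //; split => // J Jpr AJ x Jx.
apply: contrapT => nAx; apply: (Amax J); last by rewrite /P; right; split => // y /IA /AJ.
by split => // /(_ x Jx).
Qed.

Lemma gen_ideal_is_ideal s : is_ideal (gen_ideal s).
Proof.
split; first by exists (fun _ => 0); rewrite big1 // => i _; rewrite mul0r.
split=> [_ _ [c1 ->] [c2 ->]|r _ [c ->]].
  by exists (fun i => c1 i - c2 i); rewrite -sumrB; apply: eq_bigr => i _; rewrite mulrBl.
by exists (fun i => r * c i); rewrite mulr_sumr; apply: eq_bigr => i _; rewrite mulrA.
Qed.

Lemma gen_ideal_mem s a : a \in s -> gen_ideal s a.
Proof.
move=> sa; have lt_as : (index a s < size s)%N by rewrite index_mem.
exists (fun t => (t == Ordinal lt_as)%:R).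
rewrite (bigD1 (Ordinal lt_as)) //= eqxx mul1r big1 ?addr0 ?nth_index //.
by move=> i /negbTE ->; rewrite mul0r.
Qed.

Lemma gen_ideal_sub s I : is_ideal I -> (forall a, a \in s -> I a) ->
  gen_ideal s `<=` I.
Proof.
move=> hI hs _ [c ->]; apply: ideal_sum => // t.
by apply: idealMl => //; apply/hs/mem_nth.
Qed.

End Ideals.

Section ResidueFieldSum.
Variables (R : comNzRingType) (n : nat) (m : 'I_n -> set R).
Hypothesis hm : forall i, maximal_ideal (m i).

Lemma eqM_scale (g : 'I_n -> R) : (forall i, ~ m i (g i)) ->
  forall y, exists x, eqM m y (fun i => g i * x i).
Proof.
move=> nmg y; have /choice [b mb] i := maximal_ideal_invmod (hm i) (nmg i).
exists (fun i => b i * y i) => i.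
rewrite mulrA (mulrC (g i)) -{1}[y i]mul1r -mulrBl.
by apply: idealMr => //; apply: maximal_ideal_is_ideal.
Qed.

Lemma W_MP a : W_M m a <-> exists i, m i a.
Proof.
split=> [Wa|[i mia] aM].
  apply: contrapT => /forallNP nma; apply: Wa; exact: eqM_scale (fun=> a) nma.
have [x /(_ i)] := aM (fun j => (j == i)%:R); rewrite eqxx.
exact: maximal_ideal_not_1B (hm i) (idealMr _ (maximal_ideal_is_ideal (hm i)) mia).
Qed.

Lemma IM_eq_M_avoid I : (forall i, exists g, I g /\ ~ m i g) -> IM_eq_M m I.
Proof.
move=> /choice [g hg] y.
have [x yx] := eqM_scale (fun i => (hg i).2) y.
exists n, g, (fun j i => (j == i)%:R * x i); split=> [j|i]; first exact: (hg j).1.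
rewrite (bigD1 i) //= eqxx mul1r big1 ?addr0 => [|j /negbTE ->]; last by rewrite !mul0r mulr0.
exact: yx.
Qed.

Lemma IM_eq_M_not_sub I i : is_ideal I -> IM_eq_M m I -> ~ I `<=` m i.
Proof.
move=> hI IM Im; have [k [a [x [Ia /(_ i)]]]] := IM (fun j => (j == i)%:R).
rewrite eqxx; apply: (maximal_ideal_not_1B (hm i)); apply: Im.
by apply: ideal_sum => // j; apply: idealMr.
Qed.

Lemma dual_proper_strong_A_cover :
  (forall J, maximal_ideal J -> exists i, J = m i) -> dual_proper_strong_A m.
Proof.
move=> cover s ns _ IM.
have [J [hJ sJ]] := exists_maximal_ideal (conj (gen_ideal_is_ideal s) ns).
have [i Ji] := cover J hJ.
by apply: (IM_eq_M_not_sub (gen_ideal_is_ideal s) IM (i := i)); rewrite -Ji.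
Qed.

Lemma dual_proper_strong_A_const i0 :
  (forall i, m i = m i0) -> dual_proper_strong_A m.
Proof.
move=> eqm s _ sW IM; apply: (IM_eq_M_not_sub (gen_ideal_is_ideal s) IM (i := i0)).
apply: gen_ideal_sub => [|a /sW /W_MP [i]]; last by rewrite eqm.
exact: maximal_ideal_is_ideal.
Qed.

Lemma dual_proper_strong_A_maximal i0 j0 J :
    dual_proper_strong_A m -> m i0 <> m j0 -> maximal_ideal J ->
  exists k, J = m k.
Proof.
move=> dual mij hJ; apply: contrapT => /forallNP Jm.
have /choice [g hg] k : exists g, J g /\ (m i0 g \/ m j0 g) /\ ~ m k g.
  have [ik|ik] := EM (m i0 = m k).
    have [g [Jg [mg nmg]]] := maximal_ideal_avoid hJ (hm j0) (hm k) (Jm k)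
      (fun jk => mij (etrans ik (esym jk))).
    by exists g; split; [|split; [right|]].
  have [g [Jg [mg nmg]]] := maximal_ideal_avoid hJ (hm i0) (hm k) (Jm k) ik.
  by exists g; split; [|split; [left|]].
pose s := map g (enum 'I_n).
apply: (dual s).
- move=> s1; apply/(maximal_ideal_neq1 hJ)/(gen_ideal_sub (maximal_ideal_is_ideal hJ) _ s1).
  by move=> _ /mapP [k _ ->]; case: (hg k).
- move=> _ /mapP [k _ ->]; apply/W_MP.
  by have [_ [[mg|mg] _]] := hg k; [exists i0 | exists j0].
- apply: IM_eq_M_avoid => k; exists (g k); split; last by case: (hg k) => _ [].
  by apply/gen_ideal_mem/map_f; rewrite mem_enum.
Qed.

End ResidueFieldSum.

Theorem theorem3p13 (R : comNzRingType) (n : nat) (hn : (0 < n)%N)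
    (m : 'I_n -> R -> Prop) (hm : forall i, maximal_ideal (m i)) :
  dual_proper_strong_A m <->
  ((forall J : R -> Prop, maximal_ideal J <-> exists i, forall x, J x <-> m i x)
   \/ (forall i j : 'I_n, forall x, m i x <-> m j x)).
Proof.
split=> [dual|[cover|eqm]].
- have [eqm|] := EM (forall i j, m i = m j).
    by right=> i j x; rewrite (eqm i j).
  move=> /existsNP [i0 /existsNP [j0 mij]]; left=> J.
  split=> [hJ|[i /predeqP ->] //].
  have [k ->] := dual_proper_strong_A_maximal hm dual mij hJ.
  by exists k.
- apply: (dual_proper_strong_A_cover hm) => J hJ.
  by have [i /predeqP ->] := (cover J).1 hJ; exists i.
- apply: (dual_proper_strong_A_const hm (i0 := Ordinal hn)) => i.
  exact/predeqP/eqm.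
Qed.
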